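(* For all $\ell,n\in\{1,\dots,L+1\}$, $\delta\in\{1,2,3,4\}$, $w\in\mathcal W^{(\ell)}$, $q\in\mathcal W^{(n)}$, \[\big|(\mathcal E^{(\ell,\widehat{\mathbf x}^{(\delta)})}w,\mathcal E^{(n,\widehat{\mathbf x}^{(\delta)})}q)_{H^1(\widehat\Omega)}\big|\lesssim\frac{\min\{\widehat h_\ell,\widehat h_n\}}{\max\{\widehat h_\ell,\widehat h_n\}}\Big(p^{-1}\widehat h_\ell|w|^2_{H^1(\widehat\Gamma^{(\delta)})}+p^{-1}\widehat h_n|q|^2_{H^1(\widehat\Gamma^{(\delta)})}+p\,\widehat h_\ell^{-1}\|w\|^2_{L_2(\widehat\Gamma^{(\delta)})}+p\,\widehat h_n^{-1}\|q\|^2_{L_2(\widehat\Gamma^{(\delta)})}\Big).\]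
   Context: Single-patch parametric setting. $\widehat\Omega=(0,1)^2$, $p\ge1$. For $\delta=1,2$, $\Xi^{(\delta)}$ is a $p$-open knot vector on $[0,1]$ (end knots of multiplicity $p+1$, interior multiplicities in $\{1,\dots,p\}$) with distinct breakpoints satisfying $C_3\widehat h\le\zeta^{(\delta)}_{i+1}-\zeta^{(\delta)}_i\le\widehat h$. $\mathcal V=S[p,\Xi^{(1)}]\otimes S[p,\Xi^{(2)}]$, $\mathcal W=\{v|_{\partial\widehat\Omega}:v\in\mathcal V\}$. $(u,v)_{H^1(\widehat\Omega)}:=\int_{\widehat\Omega}\nabla u\cdot\nabla v$; on a side, $|w|_{H^1}$ is the $L_2$ norm of the tangential derivative. Grid hierarchy: $L\ge1$, $\widehat h_\ell:=4^{L-\ell}\widehat h$; for $\delta=1,2$, $\ell=1,\dots,L$ nested breakpoint vectors $Z^{(\delta,\ell)}$ (containing $0,1$, $Z^{(\delta,L)}$ = breakpoints of $\Xi^{(\delta)}$) with $c_0\widehat h_\ell\le$ consecutive differences $\le\widehat h_\ell$; $\Xi^{(\delta,\ell)}$ the $p$-open knot vector with breakpoints $Z^{(\delta,\ell)}$ and simple interior knots. $\gamma:\mathbb R\to\partial\widehat\Omega$ is the 4-periodic map $\gamma(t)=(0,t)$ on $[0,1)$, $(t-1,1)$ on $[1,2)$, $(1,3-t)$ on $[2,3)$, $(4-t,0)$ on $[3,4)$. For $\ell=1,\dots,L$, $\mathcal W^{(\ell)}=\{w\in(S[p,\Xi^{(1,\ell)}]\otimes S[p,\Xi^{(2,\ell)}])|_{\partial\widehat\Omega}: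 w\circ\gamma\in C^{p-1}(\mathbb R)\}$, $\mathcal W^{(L+1)}=\mathcal W$. Sides $\widehat\Gamma^{(\delta)}=\gamma((\delta-1,\delta))$ and vertices $\widehat{\mathbf x}^{(\delta)}=\gamma(\delta-1)$, $\delta=1,\dots,4$; the sides adjacent to $\widehat{\mathbf x}^{(\delta)}$ are $\widehat\Gamma^{(\delta-1)}$ and $\widehat\Gamma^{(\delta)}$ (with $\widehat\Gamma^{(0)}:=\widehat\Gamma^{(4)}$). For each side $\widehat\Gamma^{(\delta)}$ and level $\ell$, $\eta$ is the largest breakpoint (in the direction transversal to the side, of the fine knot vector) not exceeding $\max\{\widehat h_\ell,\text{smallest positive breakpoint}\}$, and $\theta^{(\ell,\widehat\Gamma^{(\delta)})}=\max\{0,1-d/\eta\}^p$ with $d$ the distance to the side. The vertex extension is $\mathcal E^{(\ell,\widehat{\mathbf x}^{(\delta)})}w=w(\widehat{\mathbf x}^{(\delta)})\,\theta^{(\ell,\widehat\Gamma^{(\delta-1)})}\,\theta^{(\ell,\widehat\Gamma^{(\delta)})}$; e.g. for $\widehat{\mathbf x}^{(1)}=(0,0)$: $w(0,0)\max\{0,1-x/\eta_1\}^p\max\{0,1-y/\eta_2\}^p$. $a\lesssim b$ means $a\le cb$ with $c$ depending only on $C_3,c_0$. *)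

From Stdlib Require Import Reals Lra Lia List.
Open Scope R_scope.

(* ---------- univariate polynomials (coefficient lists, lowest degree first) *)
Definition peval (c : list R) (x : R) : R :=
  fold_right (fun a acc => a + x * acc) 0 c.

Fixpoint pder_aux (n : nat) (c : list R) : list R :=
  match c with
  | nil => nil
  | a :: c' => (INR n * a) :: pder_aux (S n) c'
  end.

Definition pderiv (c : list R) : list R :=
  match c with nil => nil | _ :: c' => pder_aux 1 c' end.

Fixpoint pderivn (k : nat) (c : list R) : list R :=
  match k with O => c | S k' => pderiv (pderivn k' c) end.

(* ---------- knot vectors
   A knot vector on [0,1] is encoded by its list of distinct breakpoints
   together with their multiplicities: [(zeta_0,m_0); ...; (zeta_N,m_N)]. *)
Definition knotvec := list (R * nat).

Definition bp (kv : knotvec) (i : nat) : R := fst (nth i kv (0, 0%nat)).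
Definition mu (kv : knotvec) (i : nat) : nat := snd (nth i kv (0, 0%nat)).

Definition p_open (p : nat) (kv : knotvec) : Prop :=
  (2 <= length kv)%nat /\
  bp kv 0 = 0 /\ bp kv (length kv - 1) = 1 /\
  mu kv 0 = (p + 1)%nat /\ mu kv (length kv - 1) = (p + 1)%nat /\
  (forall i, (S i < length kv)%nat -> bp kv i < bp kv (S i)) /\
  (forall i, (0 < i)%nat -> (S i < length kv)%nat -> (1 <= mu kv i <= p)%nat).

Definition simple_kv (p : nat) (Z : list R) : knotvec :=
  combine Z ((p + 1)%nat :: repeat 1%nat (length Z - 2) ++ ((p + 1)%nat :: nil)).

Definition Sp (p : nat) (kv : knotvec) (f : R -> R) : Prop :=
  exists P : nat -> list R,
    (forall i, (S i < length kv)%nat ->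
       (length (P i) <= p + 1)%nat /\
       forall x, bp kv i <= x <= bp kv (S i) -> f x = peval (P i) x) /\
    (forall i, (0 < i)%nat -> (S i < length kv)%nat ->
       forall k, (k <= p - mu kv i)%nat ->
         peval (pderivn k (P (pred i))) (bp kv i) = peval (pderivn k (P i)) (bp kv i)).

Definition tensor (S1 S2 : (R -> R) -> Prop) (v : R -> R -> R) : Prop :=
  exists l : list ((R -> R) * (R -> R)),
    Forall (fun fg => S1 (fst fg) /\ S2 (snd fg)) l /\
    forall x y, v x y = fold_right (fun fg acc => fst fg x * snd fg y + acc) 0 l.

Definition on_boundary (x y : R) : Prop :=
  0 <= x <= 1 /\ 0 <= y <= 1 /\ (x = 0 \/ x = 1 \/ y = 0 \/ y = 1).

Definition gamma (t : R) : R * R :=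
  let s := t - 4 * IZR (Int_part (t / 4)) in
  if Rlt_dec s 1 then (0, s)
  else if Rlt_dec s 2 then (s - 1, 1)
  else if Rlt_dec s 3 then (1, 3 - s)
  else (4 - s, 0).

Definition wg (w : R -> R -> R) (t : R) : R := let (a, b) := gamma t in w a b.

Fixpoint Ck (k : nat) (f : R -> R) : Prop :=
  match k with
  | O => continuity f
  | S k' => exists f', (forall x, derivable_pt_lim f x (f' x)) /\ Ck k' f'
  end.

(* trace space of S[p,kv1] (x) S[p,kv2]; elements are represented by functions
   on R^2 of which only the values on the boundary matter *)
Definition trace_sp (p : nat) (kv1 kv2 : knotvec) (w : R -> R -> R) : Prop :=
  exists v, tensor (Sp p kv1) (Sp p kv2) v /\
    forall x y, on_boundary x y -> w x y = v x y.

Definition hlev (L : nat) (hhat : R) (l : nat) : R := hhat * 4 ^ L / 4 ^ l.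

Definition Wlev (p L : nat) (Xi : nat -> knotvec) (Zc : nat -> nat -> list R)
    (l : nat) (w : R -> R -> R) : Prop :=
  ((l <= L)%nat ->
     trace_sp p (simple_kv p (Zc 1%nat l)) (simple_kv p (Zc 2%nat l)) w /\
     Ck (p - 1) (wg w)) /\
  (l = S L -> trace_sp p (Xi 1%nat) (Xi 2%nat) w).

Definition gaps_ok (lo hi : R) (Z : list R) : Prop :=
  forall i, (S i < length Z)%nat -> lo <= nth (S i) Z 0 - nth i Z 0 <= hi.

Definition bpvec_ok (lo hi : R) (Z : list R) : Prop :=
  (2 <= length Z)%nat /\ nth 0 Z 0 = 0 /\ nth (length Z - 1) Z 0 = 1 /\
  gaps_ok lo hi Z.

(* side Gamma^(d) = gamma((d-1,d)): 1: x=0, 2: y=1, 3: x=1, 4: y=0 *)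
Definition side_dist (d : nat) (x y : R) : R :=
  match d with 1%nat => x | 2%nat => 1 - y | 3%nat => 1 - x | _ => y end.

Definition trans_dir (d : nat) : nat :=
  match d with 1%nat | 3%nat => 1%nat | _ => 2%nat end.

Definition bp_dist (d : nat) (z : R) : R :=
  match d with 1%nat | 4%nat => z | _ => 1 - z end.

(* smallest positive element (lists considered contain 1 and lie in [0,1]) *)
Definition minpos (ds : list R) : R :=
  fold_right (fun d acc => if Rlt_dec 0 d then Rmin d acc else acc) 1 ds.

(* largest element not exceeding M (lists considered contain 0) *)
Definition maxle (M : R) (ds : list R) : R :=
  fold_right (fun d acc => if Rle_dec d M then Rmax d acc else acc) 0 ds.

Definition eta (Xi : nat -> knotvec) (hl : R) (d : nat) : R :=
  let ds := map (fun kz => bp_dist d (fst kz)) (Xi (trans_dir d)) in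
  maxle (Rmax hl (minpos ds)) ds.

Definition theta (p : nat) (Xi : nat -> knotvec) (hl : R) (d : nat) (x y : R) : R :=
  (Rmax 0 (1 - side_dist d x y / eta Xi hl d)) ^ p.

Definition prev_side (d : nat) : nat := match d with 1%nat => 4%nat | _ => pred d end.

(* vertex x^(d) = gamma(d-1) *)
Definition vext (p : nat) (Xi : nat -> knotvec) (hl : R) (d : nat)
    (w : R -> R -> R) (x y : R) : R :=
  let (a, b) := gamma (INR d - 1) in
  w a b * theta p Xi hl (prev_side d) x y * theta p Xi hl d x y.

Definition int1 (f : R -> R) (a b I : R) : Prop :=
  exists pr : Riemann_integrable f a b, RiemannInt pr = I.

Definition int2 (F : R -> R -> R) (I : R) : Prop :=
  exists g : R -> R,
    (forall y, 0 <= y <= 1 -> int1 (fun x => F x y) 0 1 (g y)) /\ int1 g 0 1 I.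

(* (u,v)_{H^1} = int grad u . grad v ; the partial derivatives are required to
   exist off finitely many grid lines (the functions are piecewise smooth). *)
Definition H1ip (u v : R -> R -> R) (I : R) : Prop :=
  exists (ux uy vx vy : R -> R -> R) (xs ys : list R),
    (forall x y, 0 < x < 1 -> 0 < y < 1 -> ~ In x xs -> ~ In y ys ->
       derivable_pt_lim (fun s => u s y) x (ux x y) /\
       derivable_pt_lim (fun s => u x s) y (uy x y) /\
       derivable_pt_lim (fun s => v s y) x (vx x y) /\
       derivable_pt_lim (fun s => v x s) y (vy x y)) /\
    int2 (fun x y => ux x y * vx x y + uy x y * vy x y) I.

Definition side_L2sq (w : R -> R -> R) (d : nat) (S : R) : Prop :=
  int1 (fun t => (wg w t) ^ 2) (INR d - 1) (INR d) S.

Definition side_H1sq (w : R -> R -> R) (d : nat) (S : R) : Prop :=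
  exists (dw : R -> R) (l : list R),
    (forall t, INR d - 1 < t < INR d -> ~ In t l -> derivable_pt_lim (wg w) t (dw t)) /\
    int1 (fun t => (dw t) ^ 2) (INR d - 1) (INR d) S.

(* The vertex extension of [w] is a tensor product [W phi_a(x) phi_b(y)], with [W] the value of [w] at
   the vertex and [phi_a(t) = max(0, 1 - t/a)^p] a cut-off of width [a]. The H1 product of two such
   functions therefore factors into one-dimensional integrals, and [int phi_a phi_b <= min(a,b)/(p+1)],
   [int phi_a' phi_b' <= p/max(a,b)]. All widths used at level [l] are comparable to [h_l], so the
   product is bounded by [|W Q|] times [min(h_l,h_n)/max(h_l,h_n)].
   Near the vertex the trace of a spline is a single polynomial on a piece of the side of length
   [~ h_l/p]; there the trace inequality [f(a)^2 <= 2/e int f^2 + e int f'^2] bounds [W^2] by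
   [h_l/p |w|_{H1}^2 + p/h_l ||w||_{L2}^2], and [|W Q| <= (W^2 + Q^2)/2] concludes. *)

From Stdlib Require Import Reals List Lra Lia Psatz FunctionalExtensionality.
From Coquelicot Require Import Coquelicot.
Open Scope R_scope.

(** * Integration and the trace inequality *)

Lemma is_RInt_unique_R (f : R -> R) a b u v : is_RInt f a b u -> is_RInt f a b v -> u = v.
Proof.
intros Hu Hv. rewrite <- (is_RInt_unique (V:=R_CompleteNormedModule) f a b u Hu).
exact (is_RInt_unique (V:=R_CompleteNormedModule) f a b v Hv).
Qed.

Lemma is_RInt_ext_R (f g : R -> R) a b (v : R) :
  (forall x, f x = g x) -> is_RInt f a b v -> is_RInt g a b v.
Proof. intros Hfg Hf. apply is_RInt_ext with f; auto. Qed.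

Lemma is_RInt_ext_off_finite (l : list R) : forall a b (f g : R -> R) v, a <= b ->
  (forall x, a < x < b -> ~ In x l -> f x = g x) -> is_RInt f a b v -> is_RInt g a b v.
Proof.
induction l as [|t l IH]; intros a b f g v Hab Hfg Hf.
- apply is_RInt_ext with f; [|exact Hf].
  intros x Hx; rewrite Rmin_left, Rmax_right in Hx by lra; apply Hfg; auto.
- assert (Hfg' : forall x, a < x < b -> ~ In x l -> x <> t -> f x = g x).
  { intros x Hx Hn Ht; apply Hfg; [exact Hx|]. intros [E|E]; [lra|tauto]. }
  destruct (Rlt_dec a t) as [H1|H1]; [destruct (Rlt_dec t b) as [H2|H2]|].
  + assert (E1 : ex_RInt f a t).
    { apply (ex_RInt_Chasles_1 (V:=R_CompleteNormedModule)) with b; [lra|exists v; exact Hf]. }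
    assert (E2 : ex_RInt f t b).
    { apply (ex_RInt_Chasles_2 (V:=R_CompleteNormedModule)) with a; [lra|exists v; exact Hf]. }
    replace v with (plus (RInt f a t) (RInt f t b)).
    * apply (is_RInt_Chasles (V:=R_CompleteNormedModule)) with t;
        (apply IH with f; [lra| |apply (RInt_correct (V:=R_CompleteNormedModule)); auto]);
        intros x Hx Hn; apply Hfg'; auto; lra.
    * apply (is_RInt_unique_R f a b); [|exact Hf].
      apply (is_RInt_Chasles (V:=R_CompleteNormedModule)) with t;
        apply (RInt_correct (V:=R_CompleteNormedModule)); auto.
  + apply IH with f; auto. intros x Hx Hn; apply Hfg'; auto; lra.
  + apply IH with f; auto. intros x Hx Hn; apply Hfg'; auto; lra.
Qed.

Lemma is_RInt_of_int1 (f : R -> R) a b I : int1 f a b I -> is_RInt f a b I.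
Proof.
intros [pr <-]. rewrite <- RInt_Reals.
apply (RInt_correct (V:=R_CompleteNormedModule)), ex_RInt_Reals_1, pr.
Qed.

Lemma ex_RInt_continuity (f : R -> R) a b : continuity f -> ex_RInt f a b.
Proof.
intros Hf. apply (ex_RInt_continuous (V:=R_CompleteNormedModule)).
intros x _. apply continuity_pt_filterlim, Hf.
Qed.

Lemma RInt_nonneg_initial_le (f : R -> R) a c b v : a <= c <= b -> (forall x, 0 <= f x) ->
  is_RInt f a b v -> 0 <= RInt f a c <= v.
Proof.
intros Hc Hf Hv.
assert (Eab : ex_RInt f a b) by (exists v; exact Hv).
assert (Eac : ex_RInt f a c) by (apply (ex_RInt_Chasles_1 (V:=R_CompleteNormedModule)) with b; auto).
assert (Ecb : ex_RInt f c b) by (apply (ex_RInt_Chasles_2 (V:=R_CompleteNormedModule)) with a; auto).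
assert (Ev : v = RInt f a c + RInt f c b).
{ apply (is_RInt_unique_R f a b); [exact Hv|].
  apply (is_RInt_Chasles (V:=R_CompleteNormedModule)) with c;
    apply (RInt_correct (V:=R_CompleteNormedModule)); auto. }
assert (0 <= RInt f a c) by (apply RInt_ge_0; auto; lra).
assert (0 <= RInt f c b) by (apply RInt_ge_0; auto; lra).
lra.
Qed.

Lemma ball_R_between (t e s : R) : ball t e s -> t - e < s < t + e.
Proof. intros H. apply (proj1 (Rabs_lt_between' s t e)). exact H. Qed.

Lemma abs_2mul_le_young e u w : 0 < e -> Rabs (2 * u * w) <= u ^ 2 / e + e * w ^ 2.
Proof.
intros He.
assert (Ee : u ^ 2 / e + e * w ^ 2 = ((u - e * w) ^ 2 + 2 * e * u * w) / e) by (field; lra).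
assert (Ee' : u ^ 2 / e + e * w ^ 2 = ((u + e * w) ^ 2 - 2 * e * u * w) / e) by (field; lra).
assert (0 <= (u - e * w) ^ 2 / e) by (apply Rdiv_le_0_compat; [apply pow2_ge_0|lra]).
assert (0 <= (u + e * w) ^ 2 / e) by (apply Rdiv_le_0_compat; [apply pow2_ge_0|lra]).
assert (2 * e * u * w / e = 2 * u * w) by (field; lra).
apply Rabs_le; split; unfold Rdiv in *; nra.
Qed.

(* Integrating the derivative of [(1 - (x-a)/e) f(x)^2] over [a, a+e] gives [- f(a)^2]. *)
Lemma trace_ineq (f f' : R -> R) a e : 0 < e ->
  (forall x, is_derive f x (f' x)) -> continuity f' ->
  (f a) ^ 2 <= 2 / e * RInt (fun x => (f x) ^ 2) a (a + e) + e * RInt (fun x => (f' x) ^ 2) a (a + e).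
Proof.
intros He Hd Hc'.
assert (Hc : continuity f).
{ intro x. apply derivable_continuous_pt. exists (f' x). apply is_derive_Reals, Hd. }
set (s := fun x => 1 - (x - a) / e).
set (dh := fun x => - (1 / e) * (f x) ^ 2 + s x * (2 * f x * f' x)).
assert (Hdh : is_RInt dh a (a + e) (- (f a) ^ 2)).
{ replace (- (f a) ^ 2) with (minus (s (a + e) * (f (a + e)) ^ 2) (s a * (f a) ^ 2))
    by (unfold s, minus, plus, opp; simpl; field; lra).
  apply (is_RInt_derive (V:=R_CompleteNormedModule) (fun x => s x * (f x) ^ 2)).
  - intros x _. unfold dh, s. auto_derive.
    + exists (f' x); apply Hd.
    + change (fun y => f y) with f. rewrite (is_derive_unique f x (f' x) (Hd x)). unfold s. field. lra.
  - intros x _. apply continuity_pt_filterlim. unfold dh, s. reg. }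
set (G := fun x => 2 / e * (f x) ^ 2 + e * (f' x) ^ 2).
assert (IG : is_RInt (fun x => G x + dh x) a (a + e)
  (2 / e * RInt (fun x => (f x) ^ 2) a (a + e) + e * RInt (fun x => (f' x) ^ 2) a (a + e) + - (f a) ^ 2)).
{ apply (is_RInt_plus (V:=R_CompleteNormedModule)); [|exact Hdh].
  apply (is_RInt_plus (V:=R_CompleteNormedModule)); apply (is_RInt_scal (V:=R_CompleteNormedModule));
    apply (RInt_correct (V:=R_CompleteNormedModule)), ex_RInt_continuity; reg. }
assert (Hpos : 0 <= RInt (fun x => G x + dh x) a (a + e)).
{ apply RInt_ge_0; [lra|eexists; exact IG|].
  intros x Hx. unfold G, dh.
  assert (Hs : 0 <= s x <= 1).
  { unfold s. split; [|assert (0 <= (x - a) / e) by (apply Rdiv_le_0_compat; lra); lra].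
    apply Rmult_le_reg_r with e; [lra|]. unfold Rdiv. field_simplify; lra. }
  assert (Hy := proj1 (Rabs_le_between _ _) (abs_2mul_le_young e (f x) (f' x) He)).
  unfold Rdiv in *. nra. }
rewrite (is_RInt_unique (V:=R_CompleteNormedModule) _ _ _ _ IG) in Hpos. lra.
Qed.

(** * One-dimensional cut-offs *)

Definition cutoff (p : nat) (a t : R) : R := (Rmax 0 (1 - t / a)) ^ p.

(* Minus the derivative of [cutoff p a] away from the kink [t = a]. *)
Definition cutoff_slope (p : nat) (a t : R) : R :=
  if Rlt_dec t a then INR p / a * (1 - t / a) ^ pred p else 0.

Lemma ramp_01 a t : 0 < a -> 0 <= t <= a -> 0 <= 1 - t / a <= 1.
Proof.
intros Ha Ht. assert (0 <= t / a) by (apply Rdiv_le_0_compat; lra).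
assert (t / a <= 1) by (apply Rle_div_l; lra).
lra.
Qed.

Lemma pow_01 x n : 0 <= x <= 1 -> 0 <= x ^ n <= 1.
Proof. intros H; induction n; simpl; [lra|nra]. Qed.

Lemma is_RInt_truncated (f h : R -> R) m v : 0 < m <= 1 -> is_RInt h 0 m v ->
  (forall t, 0 < t < m -> f t = h t) -> (forall t, m < t < 1 -> f t = 0) ->
  is_RInt f 0 1 v.
Proof.
intros Hm Hv Hh H0.
replace v with (plus v 0) by (unfold plus; simpl; ring).
apply (is_RInt_Chasles (V:=R_CompleteNormedModule)) with m.
- apply is_RInt_ext with h; [|exact Hv].
  intros x Hx; rewrite Rmin_left, Rmax_right in Hx by lra; symmetry; auto.
- apply is_RInt_ext with (fun _ => 0).
  + intros x Hx; rewrite Rmin_left, Rmax_right in Hx by lra; symmetry; auto.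
  + assert (E := is_RInt_const (V:=R_NormedModule) m 1 0).
    replace (scal (1 - m) (0 : R_NormedModule)) with 0 in E by (unfold scal; simpl; unfold mult; simpl; ring).
    exact E.
Qed.

Lemma is_RInt_ramp_pow a n m : 0 < a ->
  is_RInt (fun t => (1 - t / a) ^ n) 0 m (a / (INR n + 1) * (1 - (1 - m / a) ^ S n)).
Proof.
intros Ha. assert (0 < INR n + 1) by (pose proof (pos_INR n); lra).
replace (a / (INR n + 1) * (1 - (1 - m / a) ^ S n)) with
  (minus (- (a / (INR n + 1)) * (1 - m / a) ^ S n) (- (a / (INR n + 1)) * (1 - 0 / a) ^ S n))
  by (replace (1 - 0 / a) with 1 by (field; lra); rewrite pow1; unfold minus, plus, opp; simpl; ring).
apply (is_RInt_derive (V:=R_CompleteNormedModule) (fun t => - (a / (INR n + 1)) * (1 - t / a) ^ S n)).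
- intros x _. auto_derive; [exact I|]. change RinvImpl.Rinv with Rinv.
  replace (match n with 0%nat => 1 | S _ => INR n + 1 end) with (INR n + 1) by (destruct n; simpl; ring).
  replace (1 + - (x * / a)) with (1 - x / a) by (unfold Rdiv; ring). field. lra.
- intros x _. apply continuity_pt_filterlim. reg.
Qed.

Lemma RInt_ramp_pow_le a n m : 0 < a -> 0 <= m <= a ->
  RInt (fun t => (1 - t / a) ^ n) 0 m <= a / (INR n + 1).
Proof.
intros Ha Hm. rewrite (is_RInt_unique (V:=R_CompleteNormedModule) _ _ _ _ (is_RInt_ramp_pow a n m Ha)).
assert (0 <= (1 - m / a) ^ S n) by (apply pow_le, ramp_01; lra).
assert (0 <= a / (INR n + 1)) by (apply Rdiv_le_0_compat; pose proof (pos_INR n); lra).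
nra.
Qed.

Lemma RInt_ramp_prod_le a b n m : 0 < a -> 0 < b -> 0 <= m <= Rmin a b ->
  0 <= RInt (fun t => (1 - t / a) ^ n * (1 - t / b) ^ n) 0 m <= Rmin a b / (INR n + 1).
Proof.
intros Ha Hb Hm.
assert (Hle : forall a b, 0 < a -> 0 < b -> 0 <= m <= Rmin a b ->
  RInt (fun t => (1 - t / a) ^ n * (1 - t / b) ^ n) 0 m <= a / (INR n + 1)).
{ clear a b Ha Hb Hm. intros a b Ha Hb Hm.
  assert (Hma := Rmin_l a b). assert (Hmb := Rmin_r a b).
  eapply Rle_trans; [|apply (RInt_ramp_pow_le a n m); lra].
  apply RInt_le; [lra|apply ex_RInt_continuity; reg|apply ex_RInt_continuity; reg|].
  intros t Ht.
  assert (Hpa := pow_01 (1 - t / a) n (ramp_01 a t Ha ltac:(lra))).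
  assert (Hpb := pow_01 (1 - t / b) n (ramp_01 b t Hb ltac:(lra))). nra. }
split.
- apply RInt_ge_0; [lra|apply ex_RInt_continuity; reg|].
  intros t Ht. assert (Hma := Rmin_l a b). assert (Hmb := Rmin_r a b).
  apply Rmult_le_pos; apply pow_le, ramp_01; lra.
- unfold Rmin at 1; destruct (Rle_dec a b).
  + apply Hle; auto.
  + rewrite (RInt_ext (V:=R_CompleteNormedModule) _ (fun t => (1 - t / b) ^ n * (1 - t / a) ^ n))
      by (intros; apply Rmult_comm).
    apply Hle; auto. rewrite Rmin_comm; auto.
Qed.

Lemma cutoff_below p a t : 0 < a -> 0 <= t <= a -> cutoff p a t = (1 - t / a) ^ p.
Proof. intros Ha Ht. unfold cutoff. rewrite Rmax_right; [reflexivity|apply ramp_01; lra]. Qed.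

Lemma cutoff_beyond p a t : (1 <= p)%nat -> 0 < a -> a <= t -> cutoff p a t = 0.
Proof.
intros Hp Ha Ht. unfold cutoff. rewrite Rmax_left.
- destruct p; [lia|simpl; ring].
- assert (1 <= t / a) by (apply Rle_div_r; lra).
  lra.
Qed.

Lemma beyond_truncation a b t : Rmin (Rmin a b) 1 < t < 1 -> a < t \/ b < t.
Proof. unfold Rmin; repeat destruct Rle_dec; lra. Qed.

Lemma truncation_bounds a b : 0 < a -> 0 < b ->
  0 < Rmin (Rmin a b) 1 <= 1 /\ Rmin (Rmin a b) 1 <= Rmin a b.
Proof. unfold Rmin; repeat destruct Rle_dec; lra. Qed.

Lemma cutoff_prod_integral p a b : (1 <= p)%nat -> 0 < a -> 0 < b ->
  exists v, is_RInt (fun t => cutoff p a t * cutoff p b t) 0 1 v /\ 0 <= v <= Rmin a b / (INR p + 1).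
Proof.
intros Hp Ha Hb. set (m := Rmin (Rmin a b) 1).
destruct (truncation_bounds a b Ha Hb) as [Hm1 Hm2]. fold m in Hm1, Hm2.
assert (Hma := Rmin_l a b). assert (Hmb := Rmin_r a b).
exists (RInt (fun t => (1 - t / a) ^ p * (1 - t / b) ^ p) 0 m). split.
- apply (is_RInt_truncated _ (fun t => (1 - t / a) ^ p * (1 - t / b) ^ p) m); [exact Hm1| | |].
  + apply (RInt_correct (V:=R_CompleteNormedModule)), ex_RInt_continuity. reg.
  + intros t Ht. rewrite !cutoff_below; auto; lra.
  + intros t Ht. destruct (beyond_truncation a b t Ht);
      [rewrite (cutoff_beyond p a)|rewrite (cutoff_beyond p b)]; auto; lra.
- apply RInt_ramp_prod_le; auto; lra.
Qed.

Lemma Rmin_mul_Rmax a b : Rmin a b * Rmax a b = a * b.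
Proof. unfold Rmin, Rmax; destruct Rle_dec; ring. Qed.

Lemma cutoff_slope_prod_integral p a b : (1 <= p)%nat -> 0 < a -> 0 < b ->
  exists v, is_RInt (fun t => cutoff_slope p a t * cutoff_slope p b t) 0 1 v /\ 0 <= v <= INR p / Rmax a b.
Proof.
intros Hp Ha Hb. set (m := Rmin (Rmin a b) 1).
destruct (truncation_bounds a b Ha Hb) as [Hm1 Hm2]. fold m in Hm1, Hm2.
set (c := INR p / a * (INR p / b)).
set (g := fun t => (1 - t / a) ^ pred p * (1 - t / b) ^ pred p).
assert (HP : 0 < INR p) by (apply lt_0_INR; lia).
assert (Hc : 0 < c) by (unfold c; apply Rmult_lt_0_compat; apply Rdiv_lt_0_compat; lra).
exists (c * RInt g 0 m). split.
- apply (is_RInt_truncated _ (fun t => c * g t) m); [exact Hm1| | |].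
  + apply (is_RInt_scal (V:=R_NormedModule)), (RInt_correct (V:=R_CompleteNormedModule)).
    apply ex_RInt_continuity. unfold g. reg.
  + intros t Ht. unfold cutoff_slope, c, g.
    assert (t < a) by (pose proof (Rmin_l a b); lra). assert (t < b) by (pose proof (Rmin_r a b); lra).
    do 2 (destruct Rlt_dec; [|lra]). ring.
  + intros t Ht. unfold cutoff_slope.
    destruct (beyond_truncation a b t Ht); do 2 (destruct Rlt_dec; try lra); ring.
- destruct (RInt_ramp_prod_le a b (pred p) m Ha Hb ltac:(lra)) as [Hg0 Hg1]. fold g in Hg0, Hg1.
  replace (INR (pred p) + 1) with (INR p) in Hg1 by (destruct p; [lia|rewrite S_INR; simpl; ring]).
  replace (INR p / Rmax a b) with (c * (Rmin a b / INR p)).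
  + split; [apply Rmult_le_pos; lra|apply Rmult_le_compat_l; lra].
  + assert (Hmax : 0 < Rmax a b) by (pose proof (Rmax_l a b); lra).
    apply Rmult_eq_reg_r with (Rmax a b); [|lra].
    replace (c * (Rmin a b / INR p) * Rmax a b) with (INR p * (Rmin a b * Rmax a b) / (a * b))
      by (unfold c; field; lra).
    rewrite Rmin_mul_Rmax. field. lra.
Qed.

(** * The H1 product of tensor products *)

Lemma is_RInt_lin_comb (f g : R -> R) a b A B c d : is_RInt f a b A -> is_RInt g a b B ->
  is_RInt (fun x => c * f x + d * g x) a b (c * A + d * B).
Proof.
intros Hf Hg.
exact (is_RInt_plus (V:=R_NormedModule) _ _ _ _ _ _
  (is_RInt_scal (V:=R_NormedModule) _ _ _ c _ Hf) (is_RInt_scal (V:=R_NormedModule) _ _ _ d _ Hg)).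
Qed.

Lemma int2_separable (f1 f2 g1 g2 : R -> R) (G : R -> R -> R) (xs ys : list R) A1 A2 B1 B2 I :
  (forall x y, 0 < x < 1 -> 0 < y < 1 -> ~ In x xs -> ~ In y ys -> G x y = f1 x * g1 y + f2 x * g2 y) ->
  is_RInt f1 0 1 A1 -> is_RInt f2 0 1 A2 -> is_RInt g1 0 1 B1 -> is_RInt g2 0 1 B2 ->
  int2 G I -> I = A1 * B1 + A2 * B2.
Proof.
intros HG Hf1 Hf2 Hg1 Hg2 (g & Hg & HI).
apply (is_RInt_unique_R g 0 1); [exact (is_RInt_of_int1 _ _ _ _ HI)|].
apply (is_RInt_ext_off_finite ys 0 1 (fun y => A1 * g1 y + A2 * g2 y)); [lra| |].
- intros y Hy Hny. apply (is_RInt_unique_R (fun x => G x y) 0 1).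
  + apply (is_RInt_ext_off_finite xs 0 1 (fun x => g1 y * f1 x + g2 y * f2 x)); [lra| |].
    * intros x Hx Hnx. rewrite HG by auto. ring.
    * replace (A1 * g1 y + A2 * g2 y) with (g1 y * A1 + g2 y * A2) by ring.
      apply is_RInt_lin_comb; auto.
  + apply is_RInt_of_int1, Hg. lra.
- apply is_RInt_lin_comb; auto.
Qed.

Lemma H1ip_tensor (f1 f2 g1 g2 df1 df2 dg1 dg2 : R -> R) (zs : list R) A B C D I :
  (forall t, 0 < t < 1 -> ~ In t zs ->
     derivable_pt_lim f1 t (df1 t) /\ derivable_pt_lim f2 t (df2 t) /\
     derivable_pt_lim g1 t (dg1 t) /\ derivable_pt_lim g2 t (dg2 t)) ->
  is_RInt (fun t => df1 t * df2 t) 0 1 A -> is_RInt (fun t => f1 t * f2 t) 0 1 B ->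
  is_RInt (fun t => g1 t * g2 t) 0 1 C -> is_RInt (fun t => dg1 t * dg2 t) 0 1 D ->
  H1ip (fun x y => f1 x * g1 y) (fun x y => f2 x * g2 y) I -> I = A * C + B * D.
Proof.
intros Hd HA HB HC HD (ux & uy & vx & vy & xs & ys & Hpd & HI).
refine (int2_separable _ _ _ _ _ (zs ++ xs) (zs ++ ys) _ _ _ _ _ _ HA HB HC HD HI).
intros x y Hx Hy Hnx Hny.
rewrite in_app_iff in Hnx, Hny.
destruct (Hpd x y Hx Hy ltac:(tauto) ltac:(tauto)) as (Dux & Duy & Dvx & Dvy).
destruct (Hd x Hx ltac:(tauto)) as (Df1 & Df2 & _).
destruct (Hd y Hy ltac:(tauto)) as (_ & _ & Dg1 & Dg2).
rewrite (uniqueness_limite _ _ _ _ Dux (derivable_pt_lim_scal_right _ _ _ (g1 y) Df1)),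
  (uniqueness_limite _ _ _ _ Dvx (derivable_pt_lim_scal_right _ _ _ (g2 y) Df2)),
  (uniqueness_limite _ _ _ _ Duy (derivable_pt_lim_scal _ (f1 x) _ _ Dg1)),
  (uniqueness_limite _ _ _ _ Dvy (derivable_pt_lim_scal _ (f2 x) _ _ Dg2)).
ring.
Qed.

Lemma derivable_pt_lim_cutoff p a t : (1 <= p)%nat -> 0 < a -> t <> a ->
  derivable_pt_lim (cutoff p a) t (- cutoff_slope p a t).
Proof.
intros Hp Ha Ht. apply is_derive_Reals. unfold cutoff_slope.
destruct (Rlt_dec t a) as [Hlt|Hge].
- apply (is_derive_ext_loc (fun s => (1 - s / a) ^ p)).
  + exists (mkposreal (a - t) ltac:(lra)). intros s Hs. apply ball_R_between in Hs. simpl in Hs.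
    unfold cutoff. rewrite Rmax_right; [reflexivity|].
    assert (s / a <= 1) by (apply Rle_div_l; lra).
    lra.
  + auto_derive; [exact I|]. change RinvImpl.Rinv with Rinv.
    replace (1 + - (t * / a)) with (1 - t / a) by (unfold Rdiv; ring). field. lra.
- apply (is_derive_ext_loc (fun _ => 0)).
  + exists (mkposreal (t - a) ltac:(lra)). intros s Hs. apply ball_R_between in Hs. simpl in Hs.
    symmetry. apply cutoff_beyond; auto; lra.
  + auto_derive; [exact I|ring].
Qed.

Definition mirror (b : bool) (t : R) : R := if b then 1 - t else t.

Definition mirror_sign (b : bool) : R := if b then -1 else 1.

Lemma derivable_pt_lim_mirror b t : derivable_pt_lim (mirror b) t (mirror_sign b).
Proof.
unfold mirror, mirror_sign. destruct b.
- apply is_derive_Reals. auto_derive; [exact I|ring].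
- apply derivable_pt_lim_id.
Qed.

Lemma is_RInt_mirror (h : R -> R) b (v : R) : is_RInt h 0 1 v -> is_RInt (fun t => h (mirror b t)) 0 1 v.
Proof.
intros H. destruct b; simpl; [|exact H].
assert (Hs : is_RInt h (-1 * 0 + 1) (-1 * 1 + 1) (opp v)).
{ replace (-1 * 0 + 1) with 1 by ring. replace (-1 * 1 + 1) with 0 by ring.
  apply (is_RInt_swap (V:=R_NormedModule)). exact H. }
apply (is_RInt_comp_lin (V:=R_NormedModule)) in Hs.
apply (is_RInt_scal (V:=R_NormedModule) _ _ _ (-1)) in Hs.
replace v with (-1 * - v) by ring.
apply is_RInt_ext with (2 := Hs). intros t _.
unfold scal; simpl; unfold mult; simpl. replace (-1 * t + 1) with (1 - t) by ring. ring.
Qed.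

Lemma derivable_pt_lim_cutoff_mirror p a b t : (1 <= p)%nat -> 0 < a -> t <> a -> t <> 1 - a ->
  derivable_pt_lim (fun s => cutoff p a (mirror b s)) t (- cutoff_slope p a (mirror b t) * mirror_sign b).
Proof.
intros Hp Ha H1 H2.
apply (derivable_pt_lim_comp (mirror b) (cutoff p a)); [apply derivable_pt_lim_mirror|].
apply derivable_pt_lim_cutoff; auto. destruct b; simpl; lra.
Qed.

Lemma mirror_sign_sqr b : mirror_sign b * mirror_sign b = 1.
Proof. destruct b; simpl; ring. Qed.

Lemma mul_le_ratio P X Y m M : 0 < P -> 0 < M -> 0 <= X <= P / M -> 0 <= Y <= m / (P + 1) ->
  X * Y <= m / M.
Proof.
intros HP HM HX HY.
assert (0 <= m) by (assert (0 < / (P + 1)) by (apply Rinv_0_lt_compat; lra); unfold Rdiv in HY; nra).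
assert (X * Y <= P / M * (m / (P + 1))) by (apply Rmult_le_compat; lra).
assert (P / M * (m / (P + 1)) = m / M * (P / (P + 1))) by (field; lra).
assert (P / (P + 1) <= 1) by (apply Rmult_le_reg_r with (P + 1); [lra|]; field_simplify; lra).
assert (0 <= m / M) by (apply Rdiv_le_0_compat; lra).
nra.
Qed.

Lemma H1ip_cutoff_tensor_eq p W Q a1 a2 b1 b2 (sx sy : bool) IA IB IC ID I : (1 <= p)%nat ->
  0 < a1 -> 0 < a2 -> 0 < b1 -> 0 < b2 ->
  is_RInt (fun t => cutoff_slope p a1 t * cutoff_slope p b1 t) 0 1 IA ->
  is_RInt (fun t => cutoff p a1 t * cutoff p b1 t) 0 1 IB ->
  is_RInt (fun t => cutoff p a2 t * cutoff p b2 t) 0 1 IC ->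
  is_RInt (fun t => cutoff_slope p a2 t * cutoff_slope p b2 t) 0 1 ID ->
  H1ip (fun x y => W * cutoff p a1 (mirror sx x) * cutoff p a2 (mirror sy y))
       (fun x y => Q * cutoff p b1 (mirror sx x) * cutoff p b2 (mirror sy y)) I ->
  I = W * Q * (IA * IC + IB * ID).
Proof.
intros Hp Ha1 Ha2 Hb1 Hb2 HA HB HC HD HI.
replace (W * Q * (IA * IC + IB * ID)) with (W * Q * IA * IC + W * Q * IB * ID) by ring.
apply (H1ip_tensor
  (fun x => W * cutoff p a1 (mirror sx x)) (fun x => Q * cutoff p b1 (mirror sx x))
  (fun y => cutoff p a2 (mirror sy y)) (fun y => cutoff p b2 (mirror sy y))
  (fun x => W * (- cutoff_slope p a1 (mirror sx x) * mirror_sign sx))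
  (fun x => Q * (- cutoff_slope p b1 (mirror sx x) * mirror_sign sx))
  (fun y => - cutoff_slope p a2 (mirror sy y) * mirror_sign sy)
  (fun y => - cutoff_slope p b2 (mirror sy y) * mirror_sign sy)
  (a1 :: 1 - a1 :: b1 :: 1 - b1 :: a2 :: 1 - a2 :: b2 :: 1 - b2 :: nil)); [| | | | |exact HI].
- intros t Ht Hn.
  repeat split; try apply derivable_pt_lim_scal; apply derivable_pt_lim_cutoff_mirror; auto;
    intro E; apply Hn; subst t; simpl; tauto.
- apply (is_RInt_ext_R
    (fun t => W * Q * (cutoff_slope p a1 (mirror sx t) * cutoff_slope p b1 (mirror sx t)))).
  + intros t. rewrite <- (Rmult_1_r (_ * _ * (_ * _))), <- (mirror_sign_sqr sx). ring.
  + apply (is_RInt_scal (V:=R_NormedModule)), (is_RInt_mirror (fun t => _ t * _ t)), HA.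
- apply (is_RInt_ext_R (fun t => W * Q * (cutoff p a1 (mirror sx t) * cutoff p b1 (mirror sx t)))).
  + intros t. ring.
  + apply (is_RInt_scal (V:=R_NormedModule)), (is_RInt_mirror (fun t => _ t * _ t)), HB.
- apply (is_RInt_mirror (fun t => _ t * _ t)), HC.
- apply (is_RInt_ext_R (fun t => cutoff_slope p a2 (mirror sy t) * cutoff_slope p b2 (mirror sy t))).
  + intros t. rewrite <- (Rmult_1_r (_ * _)), <- (mirror_sign_sqr sy). ring.
  + apply (is_RInt_mirror (fun t => _ t * _ t)), HD.
Qed.

Lemma H1ip_cutoff_tensor p W Q a1 a2 b1 b2 (sx sy : bool) I : (1 <= p)%nat ->
  0 < a1 -> 0 < a2 -> 0 < b1 -> 0 < b2 ->
  H1ip (fun x y => W * cutoff p a1 (mirror sx x) * cutoff p a2 (mirror sy y))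
       (fun x y => Q * cutoff p b1 (mirror sx x) * cutoff p b2 (mirror sy y)) I ->
  Rabs I <= Rabs (W * Q) * (Rmin a2 b2 / Rmax a1 b1 + Rmin a1 b1 / Rmax a2 b2).
Proof.
intros Hp Ha1 Ha2 Hb1 Hb2 HI.
destruct (cutoff_slope_prod_integral p a1 b1 Hp Ha1 Hb1) as (IA & HA & BA).
destruct (cutoff_prod_integral p a1 b1 Hp Ha1 Hb1) as (IB & HB & BB).
destruct (cutoff_prod_integral p a2 b2 Hp Ha2 Hb2) as (IC & HC & BC).
destruct (cutoff_slope_prod_integral p a2 b2 Hp Ha2 Hb2) as (ID & HD & BD).
rewrite (H1ip_cutoff_tensor_eq p W Q a1 a2 b1 b2 sx sy IA IB IC ID I) by auto.
assert (HP : 0 < INR p) by (apply lt_0_INR; lia).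
assert (HAC : IA * IC <= Rmin a2 b2 / Rmax a1 b1).
{ apply (mul_le_ratio (INR p)); auto. pose proof (Rmax_l a1 b1); lra. }
assert (HBD : ID * IB <= Rmin a1 b1 / Rmax a2 b2).
{ apply (mul_le_ratio (INR p)); auto. pose proof (Rmax_l a2 b2); lra. }
rewrite Rabs_mult. apply Rmult_le_compat_l; [apply Rabs_pos|].
rewrite Rabs_right by nra. lra.
Qed.

Lemma vext_tensor p Xi d : (1 <= d <= 4)%nat -> exists dx dy sx sy,
  (1 <= dx <= 4)%nat /\ (1 <= dy <= 4)%nat /\ forall h w,
  vext p Xi h d w = fun x y => wg w (INR d - 1) *
    cutoff p (eta Xi h dx) (mirror sx x) * cutoff p (eta Xi h dy) (mirror sy y).
Proof.
intros Hd. destruct d as [|[|[|[|[|d]]]]]; try lia;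
  [exists 1%nat, 4%nat, false, false|exists 1%nat, 2%nat, false, true
  |exists 3%nat, 2%nat, true, true|exists 3%nat, 4%nat, true, false];
  (split; [lia|split; [lia|]]); intros h w;
  apply functional_extensionality; intro x; apply functional_extensionality; intro y;
  unfold vext, wg, theta, cutoff, mirror; simpl; destruct (gamma _); ring.
Qed.

(** * Knot grids and cut-off widths *)

Definition grid (z : nat -> R) (N : nat) (lo hi : R) : Prop :=
  z 0%nat = 0 /\ z N = 1 /\ forall i, (i < N)%nat -> lo <= z (S i) - z i <= hi.

Section Grid.
Variables (z : nat -> R) (N : nat) (lo hi : R).
Hypothesis Hlo : 0 < lo.
Hypothesis Hgrid : grid z N lo hi.

Lemma grid_le i j : (i <= j <= N)%nat -> z i <= z j.
Proof.
destruct Hgrid as (_ & _ & Hg). intros [Hij HjN].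
induction Hij as [|j Hij IH]; [lra|]. specialize (Hg j ltac:(lia)). specialize (IH ltac:(lia)). lra.
Qed.

Lemma grid_range i : (i <= N)%nat -> 0 <= z i <= 1.
Proof.
destruct Hgrid as (H0 & HN & _). intros Hi. rewrite <- H0, <- HN. split; apply grid_le; lia.
Qed.

Lemma grid_size : (1 <= N)%nat.
Proof. destruct Hgrid as (H0 & HN & _). destruct N; [rewrite H0 in HN; lra|lia]. Qed.

Lemma grid_first_step : lo <= z 1%nat <= hi.
Proof.
destruct Hgrid as (H0 & _ & Hg). pose proof grid_size. specialize (Hg 0%nat ltac:(lia)). lra.
Qed.

Lemma grid_pos_ge i : (i <= N)%nat -> 0 < z i -> lo <= z i.
Proof.
destruct Hgrid as (H0 & _ & _). intros Hi Hz. destruct i as [|i]; [lra|].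
pose proof grid_first_step. assert (z 1%nat <= z (S i)) by (apply grid_le; lia). lra.
Qed.

Lemma grid_cover t : 0 <= t <= 1 -> exists i, (i <= N)%nat /\ t - hi <= z i <= t.
Proof.
pose proof grid_first_step as Hstep. destruct Hgrid as (H0 & HN & Hg). intros Ht.
assert (C : forall m k, (k + m = N)%nat -> z k <= t -> exists i, (i <= N)%nat /\ t - hi <= z i <= t).
{ induction m as [|m IH]; intros k Hk Hz.
  - exists k. split; [lia|]. replace k with N in * by lia. lra.
  - destruct (Rle_dec (z (S k)) t) as [H|H].
    + apply (IH (S k)); auto; lia.
    + exists k. split; [lia|]. specialize (Hg k ltac:(lia)). lra. }
apply (C N 0%nat); lia || lra.
Qed.

End Grid.

Lemma grid_rev z N lo hi : grid z N lo hi -> grid (fun i => 1 - z (N - i)%nat) N lo hi.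
Proof.
intros (H0 & HN & Hg). split; [|split].
- rewrite Nat.sub_0_r. lra.
- rewrite Nat.sub_diag. lra.
- intros i Hi. replace (N - i)%nat with (S (N - S i)) by lia. specialize (Hg (N - S i)%nat ltac:(lia)). lra.
Qed.

Lemma maxle_le M ds : 0 <= M -> maxle M ds <= M.
Proof. intros HM; induction ds as [|d ds IH]; simpl; [lra|]. destruct Rle_dec; [apply Rmax_lub|]; lra. Qed.

Lemma maxle_ge M ds e : In e ds -> e <= M -> e <= maxle M ds.
Proof.
induction ds as [|d ds IH]; simpl; [tauto|]. intros [->|H] He.
- destruct Rle_dec; [apply Rmax_l|lra].
- destruct Rle_dec; [eapply Rle_trans; [apply IH; auto|apply Rmax_r]|auto].
Qed.

Lemma minpos_le ds e : In e ds -> 0 < e -> minpos ds <= e.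
Proof.
induction ds as [|d ds IH]; simpl; [tauto|]. intros [->|H] He.
- destruct Rlt_dec; [apply Rmin_l|lra].
- destruct Rlt_dec; [eapply Rle_trans; [apply Rmin_r|apply IH; auto]|auto].
Qed.

Lemma minpos_in ds : minpos ds = 1 \/ In (minpos ds) ds.
Proof.
induction ds as [|d ds IH]; simpl; [auto|]. destruct Rlt_dec; [|tauto].
unfold Rmin; destruct Rle_dec; [right; left; auto|]. destruct IH; [left|right; right]; auto.
Qed.

Lemma minpos_ge ds lo : lo <= 1 -> (forall e, In e ds -> 0 < e -> lo <= e) -> lo <= minpos ds.
Proof.
intros H1 H; induction ds as [|d ds IH]; simpl; [lra|]. destruct Rlt_dec.
- apply Rmin_glb; [apply H; simpl; auto|apply IH; intros; apply H; simpl; auto].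
- apply IH; intros; apply H; simpl; auto.
Qed.

Lemma maxle_grid_bounds z N lo hi h ds : 0 < lo -> 0 < h -> grid z N lo hi ->
  (forall e, In e ds <-> exists i, (i <= N)%nat /\ e = z i) ->
  let E := maxle (Rmax h (minpos ds)) ds in
  E <= Rmax h hi /\ lo <= E /\ Rmin h 1 - hi <= E.
Proof.
intros Hlo Hh G Hds E.
assert (Hz1 := grid_first_step z N lo hi G). assert (HN := grid_size z N lo hi G).
assert (Hin1 : In (z 1%nat) ds) by (apply Hds; exists 1%nat; auto).
assert (Hmp1 : minpos ds <= z 1%nat) by (apply minpos_le; auto; lra).
assert (Hmp2 : lo <= minpos ds).
{ apply minpos_ge; [pose proof (grid_range z N lo hi Hlo G 1%nat HN); lra|].
  intros e He Hpos. apply Hds in He as (i & Hi & ->). apply (grid_pos_ge z N lo hi Hlo G); auto. }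
assert (Hmp3 : In (minpos ds) ds).
{ destruct (minpos_in ds) as [E1|E1]; [rewrite E1|exact E1].
  apply Hds. exists N. split; [lia|symmetry; apply (proj1 (proj2 G))]. }
split; [|split].
- eapply Rle_trans; [apply maxle_le; pose proof (Rmax_l h (minpos ds)); lra|].
  apply Rmax_lub; [apply Rmax_l|eapply Rle_trans; [|apply Rmax_r]; lra].
- eapply Rle_trans; [exact Hmp2|]. apply maxle_ge; [exact Hmp3|apply Rmax_r].
- destruct (grid_cover z N lo hi Hlo G (Rmin h 1)) as (i & Hi & Hzi).
  { split; [apply Rmin_glb; lra|apply Rmin_r]. }
  eapply Rle_trans; [apply Hzi|]. apply maxle_ge; [apply Hds; exists i; auto|].
  eapply Rle_trans; [apply Hzi|]. eapply Rle_trans; [apply Rmin_l|apply Rmax_l].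
Qed.

Lemma nth_map_fst (kv : knotvec) i : nth i (map fst kv) 0 = bp kv i.
Proof. unfold bp. change 0 with (fst (0, 0%nat)) at 1. apply map_nth. Qed.

Definition kv_grid (kv : knotvec) (lo hi : R) : Prop := grid (bp kv) (length kv - 1) lo hi.

Lemma p_open_grid p kv lo hi : p_open p kv -> gaps_ok lo hi (map fst kv) -> kv_grid kv lo hi.
Proof.
intros (H1 & H2 & H3 & _) Hg. split; [auto|split; [auto|]].
intros i Hi. specialize (Hg i). rewrite length_map, !nth_map_fst in Hg. apply Hg; lia.
Qed.

Lemma in_map_bp (f : R -> R) (kv : knotvec) e :
  In e (map (fun kz => f (fst kz)) kv) <-> exists i, (i < length kv)%nat /\ e = f (bp kv i).
Proof.
rewrite in_map_iff. split.
- intros (x & <- & Hin). destruct (In_nth kv x (0, 0%nat) Hin) as (i & Hi & Hn).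
  exists i. split; auto. unfold bp. rewrite Hn. reflexivity.
- intros (i & Hi & ->). exists (nth i kv (0, 0%nat)). split; auto. apply nth_In; auto.
Qed.

Lemma eta_bounds p Xi d lo hi h : (1 <= d <= 4)%nat -> p_open p (Xi (trans_dir d)) ->
  gaps_ok lo hi (map fst (Xi (trans_dir d))) -> 0 < lo -> 0 < h ->
  eta Xi h d <= Rmax h hi /\ lo <= eta Xi h d /\ Rmin h 1 - hi <= eta Xi h d.
Proof.
intros Hd Hp Hg Hlo Hh. unfold eta.
assert (G := p_open_grid p _ lo hi Hp Hg).
set (kv := Xi (trans_dir d)) in *. set (N := (length kv - 1)%nat) in *.
assert (HN := grid_size _ _ _ _ G). unfold N in HN.
assert (Hb : (d = 1 \/ d = 4)%nat \/ (d = 2 \/ d = 3)%nat) by lia.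
destruct Hb as [Hb|Hb].
- apply (maxle_grid_bounds (bp kv) N lo hi); auto. intro e. rewrite in_map_bp. unfold N.
  split; intros (i & Hi & ->); exists i; (split; [lia|]); destruct Hb as [-> | ->]; reflexivity.
- apply (maxle_grid_bounds (fun i => 1 - bp kv (N - i)%nat) N lo hi); auto; [apply grid_rev; auto|].
  intro e. rewrite in_map_bp. split.
  + intros (i & Hi & ->). exists (N - i)%nat. split; [lia|].
    replace (N - (N - i))%nat with i by (unfold N in *; lia). destruct Hb as [-> | ->]; reflexivity.
  + intros (i & Hi & ->). exists (N - i)%nat. split; [unfold N in *; lia|].
    destruct Hb as [-> | ->]; reflexivity.
Qed.

(** * Traces near a vertex *)

Lemma Ck1_ext (f g : R -> R) : (forall x, f x = g x) -> Ck 1 f -> Ck 1 g.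
Proof. intros E Hf. replace g with f by (apply functional_extensionality; exact E). exact Hf. Qed.

Lemma Ck1_continuity f : Ck 1 f -> continuity f.
Proof. intros (f' & Hf & _) x. apply derivable_continuous_pt. exists (f' x). apply Hf. Qed.

Lemma Ck1_const c : Ck 1 (fun _ => c).
Proof.
exists (fun _ => 0). split; [intro; apply derivable_pt_lim_const|apply continuity_const; now intros].
Qed.

Lemma Ck1_id : Ck 1 (fun x => x).
Proof. exists (fun _ => 1). split; [intro; apply derivable_pt_lim_id|apply continuity_const; now intros]. Qed.

Lemma Ck1_plus f g : Ck 1 f -> Ck 1 g -> Ck 1 (fun x => f x + g x).
Proof.
intros (f' & Hf & Cf) (g' & Hg & Cg). exists (fun x => f' x + g' x).
split; [intro; apply derivable_pt_lim_plus; auto|apply continuity_plus; auto].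
Qed.

Lemma Ck1_mult f g : Ck 1 f -> Ck 1 g -> Ck 1 (fun x => f x * g x).
Proof.
intros Hf0 Hg0. assert (Cf0 := Ck1_continuity f Hf0). assert (Cg0 := Ck1_continuity g Hg0).
destruct Hf0 as (f' & Hf & Cf), Hg0 as (g' & Hg & Cg). exists (fun x => f' x * g x + f x * g' x).
split; [intro; apply derivable_pt_lim_mult; auto|apply continuity_plus; apply continuity_mult; auto].
Qed.

Lemma Ck1_comp f g : Ck 1 f -> Ck 1 g -> Ck 1 (fun x => f (g x)).
Proof.
intros Hf0 Hg0. assert (Cg0 := Ck1_continuity g Hg0).
destruct Hf0 as (f' & Hf & Cf), Hg0 as (g' & Hg & Cg). exists (fun x => f' (g x) * g' x). split.
- intro x. apply (derivable_pt_lim_comp g f); auto.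
- apply continuity_mult; auto. intro x. apply continuity_pt_comp; auto.
Qed.

Lemma Ck1_peval c : Ck 1 (peval c).
Proof.
induction c as [|a c IH]; simpl; [apply Ck1_const|].
apply (Ck1_plus (fun _ => a) (fun x => x * peval c x)); [apply Ck1_const|apply Ck1_mult; auto; apply Ck1_id].
Qed.

Lemma Ck1_reflect f k : Ck 1 f -> Ck 1 (fun x => f (k - x)).
Proof.
intros Hf. apply (Ck1_comp f (fun x => k - x)); auto.
apply (Ck1_plus (fun _ => k) (fun x => - x)); [apply Ck1_const|].
apply (Ck1_ext (fun x => -1 * x)); [intro; ring|apply Ck1_mult; [apply Ck1_const|apply Ck1_id]].
Qed.

Lemma Ck1_shift f k : Ck 1 f -> Ck 1 (fun x => f (x - k)).
Proof.
intros Hf. apply (Ck1_comp f (fun x => x - k)); auto.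
apply (Ck1_plus (fun x => x) (fun _ => - k)); [apply Ck1_id|apply Ck1_const].
Qed.

(* The first and last knot spans have length at least [lo], so there the spline is a single polynomial. *)
Lemma spline_near_ends p kv lo hi f e : 0 < lo -> kv_grid kv lo hi -> 0 < e <= lo -> Sp p kv f ->
  (exists G, Ck 1 G /\ forall t, 0 <= t <= e -> f t = G t) /\
  (exists G, Ck 1 G /\ forall t, 0 <= t <= e -> f (1 - t) = G t).
Proof.
intros Hlo K He (P & HP & _).
assert (HN := grid_size _ _ _ _ K). destruct K as (K0 & K1 & Kg).
split.
- exists (peval (P 0%nat)). split; [apply Ck1_peval|].
  intros t Ht. apply (HP 0%nat ltac:(lia)). specialize (Kg 0%nat ltac:(lia)). lra.
- exists (fun t => peval (P (length kv - 2)%nat) (1 - t)). split; [apply Ck1_reflect, Ck1_peval|].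
  intros t Ht. apply (HP (length kv - 2)%nat ltac:(lia)).
  specialize (Kg (length kv - 2)%nat ltac:(lia)).
  replace (S (length kv - 2)) with (length kv - 1)%nat in * by lia. lra.
Qed.

Definition side_point (d : nat) (t : R) : R * R :=
  match d with 1%nat => (0, t) | 2%nat => (t, 1) | 3%nat => (1, 1 - t) | _ => (1 - t, 0) end.

Lemma Int_part_small r : 0 <= r < 1 -> Int_part r = 0%Z.
Proof. intros H. unfold Int_part. rewrite <- (tech_up r 1); [reflexivity| |]; simpl; lra. Qed.

Lemma gamma_side d t : (1 <= d <= 4)%nat -> 0 <= t < 1 -> gamma (INR d - 1 + t) = side_point d t.
Proof.
intros Hd Ht. unfold gamma.
assert (Hs : 0 <= INR d - 1 + t < 4) by (destruct d as [|[|[|[|[|d]]]]]; try lia; simpl; lra).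
rewrite (Int_part_small ((INR d - 1 + t) / 4)) by (split; [apply Rdiv_le_0_compat|]; lra).
replace (INR d - 1 + t - 4 * IZR 0) with (INR d - 1 + t) by ring.
destruct d as [|[|[|[|[|d]]]]]; try lia; simpl INR; unfold side_point;
  repeat destruct Rlt_dec; try lra; f_equal; ring.
Qed.

Lemma tensor_term_near_side_start p kv1 kv2 lo hi d e f g : 0 < lo -> (1 <= d <= 4)%nat ->
  kv_grid kv1 lo hi -> kv_grid kv2 lo hi -> 0 < e <= lo -> Sp p kv1 f -> Sp p kv2 g ->
  exists G, Ck 1 G /\ forall t, 0 <= t <= e -> f (fst (side_point d t)) * g (snd (side_point d t)) = G t.
Proof.
intros Hlo Hd K1 K2 He Sf Sg.
destruct (spline_near_ends p kv1 lo hi f e Hlo K1 He Sf) as ((F1 & CF1 & EF1) & (F2 & CF2 & EF2)).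
destruct (spline_near_ends p kv2 lo hi g e Hlo K2 He Sg) as ((G1 & CG1 & EG1) & (G2 & CG2 & EG2)).
destruct d as [|[|[|[|[|d]]]]]; try lia; simpl side_point; simpl fst; simpl snd;
  [exists (fun t => f 0 * G1 t)|exists (fun t => F1 t * g 1)
  |exists (fun t => f 1 * G2 t)|exists (fun t => F2 t * g 0)];
  (split; [apply Ck1_mult; auto; apply Ck1_const|]); intros t Ht;
  [rewrite EG1|rewrite EF1|rewrite EG2|rewrite EF2]; auto.
Qed.

Lemma side_point_on_boundary d t : (1 <= d <= 4)%nat -> 0 <= t <= 1 ->
  on_boundary (fst (side_point d t)) (snd (side_point d t)).
Proof.
intros Hd Ht. unfold on_boundary. destruct d as [|[|[|[|[|d]]]]]; try lia; simpl; repeat split; lra.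
Qed.

Lemma trace_near_vertex_C1 p kv1 kv2 lo hi d e w : 0 < lo -> (1 <= d <= 4)%nat ->
  kv_grid kv1 lo hi -> kv_grid kv2 lo hi -> 0 < e <= lo -> e < 1 -> trace_sp p kv1 kv2 w ->
  exists F, Ck 1 F /\ forall t, INR d - 1 <= t <= INR d - 1 + e -> wg w t = F t.
Proof.
intros Hlo Hd K1 K2 He He1 (v & (l & HF & Hv) & Hb).
assert (Hsum : exists G, Ck 1 G /\ forall t, 0 <= t <= e ->
  fold_right (fun fg acc => fst fg (fst (side_point d t)) * snd fg (snd (side_point d t)) + acc) 0 l = G t).
{ clear Hv Hb. induction l as [|[f g] l IH].
  - exists (fun _ => 0). split; [apply Ck1_const|reflexivity].
  - inversion HF as [|? ? [Sf Sg] HF']; subst. destruct (IH HF') as (G & CG & EG).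
    destruct (tensor_term_near_side_start p kv1 kv2 lo hi d e f g Hlo Hd K1 K2 He Sf Sg) as (T & CT & ET).
    exists (fun t => T t + G t). split; [apply Ck1_plus; auto|].
    intros t Ht. simpl. rewrite <- ET, <- EG; auto. }
destruct Hsum as (G & CG & EG).
exists (fun t => G (t - (INR d - 1))). split; [apply Ck1_shift; auto|].
intros t Ht. rewrite <- EG, <- Hv by lra.
set (s := t - (INR d - 1)).
assert (Hbd := side_point_on_boundary d s Hd ltac:(unfold s; lra)).
unfold wg. replace t with (INR d - 1 + s) at 1 by (unfold s; ring).
rewrite gamma_side by (auto; unfold s; lra).
destruct (side_point d s) as [x y]. apply Hb, Hbd.
Qed.

Lemma int1_square_nonneg (f : R -> R) a b v : a <= b -> int1 (fun t => (f t) ^ 2) a b v -> 0 <= v.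
Proof.
intros Hab Hv. apply is_RInt_of_int1 in Hv.
destruct (RInt_nonneg_initial_le _ a b b v ltac:(lra) (fun t => pow2_ge_0 _) Hv). lra.
Qed.

Lemma derivable_pt_lim_local_ext (f g : R -> R) x l a b : a < x < b ->
  (forall t, a < t < b -> f t = g t) -> derivable_pt_lim f x l -> derivable_pt_lim g x l.
Proof.
intros Hx Hfg Hf. apply is_derive_Reals. apply (is_derive_ext_loc f); [|apply is_derive_Reals, Hf].
exists (mkposreal (Rmin (x - a) (b - x)) ltac:(apply Rmin_glb_lt; lra)).
intros t Ht. apply ball_R_between in Ht. simpl in Ht.
pose proof (Rmin_l (x - a) (b - x)). pose proof (Rmin_r (x - a) (b - x)). apply Hfg. lra.
Qed.

Lemma vertex_value_sqr_le w d e Hw L2w F : 0 < e < 1 -> Ck 1 F ->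
  (forall t, INR d - 1 <= t <= INR d - 1 + e -> wg w t = F t) ->
  side_H1sq w d Hw -> side_L2sq w d L2w ->
  (wg w (INR d - 1)) ^ 2 <= 2 / e * L2w + e * Hw.
Proof.
intros He (F' & HdF & CF') EF (dw & l & Hdw & IH) IL. unfold side_L2sq in IL.
set (a := INR d - 1) in *. replace (INR d) with (a + 1) in * by (unfold a; ring).
apply is_RInt_of_int1 in IL, IH.
assert (Htr := trace_ineq F F' a e ltac:(lra) (fun x => proj2 (is_derive_Reals _ _ _) (HdF x)) CF').
assert (EL : RInt (fun x => (F x) ^ 2) a (a + e) = RInt (fun t => (wg w t) ^ 2) a (a + e)).
{ apply RInt_ext. intros x Hx. rewrite Rmin_left, Rmax_right in Hx by lra. rewrite EF; auto; lra. }
assert (EH : is_RInt (fun t => (dw t) ^ 2) a (a + e) (RInt (fun x => (F' x) ^ 2) a (a + e))).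
{ apply (is_RInt_ext_off_finite l a (a + e) (fun x => (F' x) ^ 2)); [lra| |].
  - intros x Hx Hn. f_equal. apply (uniqueness_limite F x); [apply HdF|].
    apply (derivable_pt_lim_local_ext (wg w) F x _ a (a + e)); auto.
    + intros t Ht. apply EF. lra.
    + apply Hdw; auto. lra.
  - apply (RInt_correct (V:=R_CompleteNormedModule)), ex_RInt_continuity. reg. exact CF'. }
destruct (RInt_nonneg_initial_le _ a (a + e) (a + 1) _ ltac:(lra) (fun x => pow2_ge_0 _) IL).
destruct (RInt_nonneg_initial_le _ a (a + e) (a + 1) _ ltac:(lra) (fun x => pow2_ge_0 _) IH).
rewrite (is_RInt_unique (V:=R_CompleteNormedModule) _ _ _ _ EH) in *.
rewrite <- (EF a), EL in Htr by lra.
assert (0 < 2 / e) by (apply Rdiv_lt_0_compat; lra).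
eapply Rle_trans; [exact Htr|]. apply Rplus_le_compat; apply Rmult_le_compat_l; lra.
Qed.

(** * The grid hierarchy *)

Lemma min_div_max_le k hl hn a b c d : 0 < k -> 0 < hl -> 0 < hn ->
  0 <= a <= 4 * hl -> 0 <= b <= 4 * hn -> k * hl <= c -> k * hn <= d ->
  Rmin a b / Rmax c d <= 4 / k * (Rmin hl hn / Rmax hl hn).
Proof.
intros Hk Hl Hn Ha Hb Hc Hd.
assert (Hmin : Rmin a b <= 4 * Rmin hl hn).
{ rewrite Rmult_min_distr_l by lra.
  eapply Rle_trans; [apply Rle_min_compat_r, Ha|apply Rle_min_compat_l, Hb]. }
assert (Hmax : k * Rmax hl hn <= Rmax c d).
{ rewrite Rmult_max_distr_l by lra. apply Rmax_le_compat; lra. }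
assert (HM : 0 < Rmax hl hn) by (pose proof (Rmax_l hl hn); lra).
assert (Hpos : 0 < k * Rmax hl hn) by nra.
assert (0 <= Rmin a b) by (apply Rmin_glb; lra).
replace (4 / k * (Rmin hl hn / Rmax hl hn)) with (4 * Rmin hl hn / (k * Rmax hl hn)) by (field; lra).
unfold Rdiv. apply Rmult_le_compat; try lra.
- left; apply Rinv_0_lt_compat; lra.
- apply Rinv_le_contravar; lra.
Qed.

Lemma hlev_pos L hhat l : 0 < hhat -> 0 < hlev L hhat l.
Proof.
intros. unfold hlev. assert (0 < 4 ^ L) by (apply pow_lt; lra). assert (0 < 4 ^ l) by (apply pow_lt; lra).
apply Rdiv_lt_0_compat; nra.
Qed.

Lemma hlev_ge L hhat l : 0 < hhat -> (l <= L)%nat -> hhat <= hlev L hhat l.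
Proof.
intros Hh Hl. unfold hlev. replace L with (l + (L - l))%nat at 1 by lia. rewrite pow_add.
assert (0 < 4 ^ l) by (apply pow_lt; lra). assert (1 <= 4 ^ (L - l)) by (apply pow_R1_Rle; lra).
replace (hhat * (4 ^ l * 4 ^ (L - l)) / 4 ^ l) with (hhat * 4 ^ (L - l)) by (field; lra). nra.
Qed.

Lemma hlev_finest L hhat : hlev L hhat (S L) = hhat / 4.
Proof. unfold hlev. simpl. assert (0 < 4 ^ L) by (apply pow_lt; lra). field. lra. Qed.

Lemma simple_kv_grid p Z lo hi : bpvec_ok lo hi Z -> kv_grid (simple_kv p Z) lo hi.
Proof.
intros (HZ & H0 & H1 & Hg).
assert (Hlen : length (simple_kv p Z) = length Z).
{ unfold simple_kv. rewrite length_combine. simpl. rewrite length_app, repeat_length. simpl. lia. }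
assert (Hbp : forall i, bp (simple_kv p Z) i = nth i Z 0).
{ intros i. unfold bp, simple_kv. rewrite combine_nth; [reflexivity|].
  simpl. rewrite length_app, repeat_length. simpl. lia. }
unfold kv_grid, grid. rewrite Hlen, !Hbp. split; [auto|split; [auto|]].
intros i Hi. rewrite !Hbp. apply Hg. lia.
Qed.

Lemma kv_grid_lo_le_1 kv lo hi : 0 < lo -> kv_grid kv lo hi -> lo <= 1.
Proof.
intros Hlo K. pose proof (grid_first_step _ _ _ _ K).
pose proof (grid_range _ _ _ _ Hlo K 1%nat (grid_size _ _ _ _ K)). lra.
Qed.

Section Hierarchy.
Variables (C3 c0 : R) (p L : nat) (hhat : R) (Xi : nat -> knotvec) (Zc : nat -> nat -> list R).
Hypothesis HC3 : 0 < C3.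
Hypothesis Hc0 : 0 < c0.
Hypothesis Hh : 0 < hhat.
Hypothesis HXi : forall d, (d = 1 \/ d = 2)%nat ->
  p_open p (Xi d) /\ gaps_ok (C3 * hhat) hhat (map fst (Xi d)).
Hypothesis HZ : forall d l, (d = 1 \/ d = 2)%nat -> (1 <= l <= L)%nat ->
  bpvec_ok (c0 * hlev L hhat l) (hlev L hhat l) (Zc d l).

Lemma level_trace l w : (1 <= l <= S L)%nat -> Wlev p L Xi Zc l w ->
  exists kv1 kv2 lo hi, trace_sp p kv1 kv2 w /\ kv_grid kv1 lo hi /\ kv_grid kv2 lo hi /\
    Rmin c0 (4 * C3) * hlev L hhat l <= lo.
Proof.
intros Hl (Wcoarse & Wfine). assert (Hmin := Rmin_glb_lt c0 (4 * C3) 0 Hc0 ltac:(lra)).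
destruct (Nat.eq_dec l (S L)) as [E|E].
- exists (Xi 1%nat), (Xi 2%nat), (C3 * hhat), hhat. split; [auto|].
  destruct (HXi 1%nat) as (P1 & G1); auto. destruct (HXi 2%nat) as (P2 & G2); auto.
  split; [apply (p_open_grid p); auto|split; [apply (p_open_grid p); auto|]].
  rewrite E, hlev_finest. pose proof (Rmin_r c0 (4 * C3)). nra.
- destruct (Wcoarse ltac:(lia)) as (T & _).
  exists (simple_kv p (Zc 1%nat l)), (simple_kv p (Zc 2%nat l)), (c0 * hlev L hhat l), (hlev L hhat l).
  split; [exact T|].
  split; [apply simple_kv_grid, HZ; auto; lia|split; [apply simple_kv_grid, HZ; auto; lia|]].
  pose proof (Rmin_l c0 (4 * C3)). pose proof (hlev_pos L hhat l Hh). nra.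
Qed.

Definition trace_scale : R := Rmin c0 (4 * C3) / 2.

Lemma trace_scale_pos : 0 < trace_scale.
Proof. unfold trace_scale. pose proof (Rmin_glb_lt c0 (4 * C3) 0 Hc0 ltac:(lra)). lra. Qed.

Definition trace_const : R := 2 / trace_scale + trace_scale.

Lemma trace_const_pos : 0 < trace_const.
Proof.
unfold trace_const. pose proof trace_scale_pos.
assert (0 < 2 / trace_scale) by (apply Rdiv_lt_0_compat; lra). lra.
Qed.

(* The trace inequality is applied on the piece of the side of length [trace_scale * h / p]
   next to the vertex. *)
Lemma vertex_value_level_bound l w d Hw L2w : (1 <= p)%nat -> (1 <= l <= S L)%nat -> Wlev p L Xi Zc l w ->
  side_H1sq w d Hw -> side_L2sq w d L2w -> (1 <= d <= 4)%nat ->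
  (wg w (INR d - 1)) ^ 2 <= trace_const * (hlev L hhat l / INR p * Hw + INR p / hlev L hhat l * L2w).
Proof.
intros Hp Hl Wl HH HL Hd. set (h := hlev L hhat l). assert (Hhp : 0 < h) by apply hlev_pos, Hh.
assert (HP : 1 <= INR p) by (apply (le_INR 1); lia).
destruct (level_trace l w Hl Wl) as (kv1 & kv2 & lo & hi & T & K1 & K2 & Hlo). fold h in Hlo.
assert (Hkt := trace_scale_pos).
assert (Hlo0 : 0 < lo) by (unfold trace_scale in Hkt; nra).
assert (Hlo1 := kv_grid_lo_le_1 kv1 lo hi Hlo0 K1).
set (e := trace_scale * h / INR p).
assert (He0 : 0 < e) by (unfold e; apply Rdiv_lt_0_compat; nra).
assert (Hel : e <= lo / 2).
{ unfold e, trace_scale. apply Rmult_le_reg_r with (INR p); [lra|].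
  unfold Rdiv. rewrite Rmult_assoc, Rinv_l by lra.
  assert (0 <= Rmin c0 (4 * C3)) by (apply Rmin_glb; lra). nra. }
destruct (trace_near_vertex_C1 p kv1 kv2 lo hi d e w Hlo0 Hd K1 K2 ltac:(lra) ltac:(lra) T) as (F & CF & EF).
assert (B := vertex_value_sqr_le w d e Hw L2w F ltac:(lra) CF EF HH HL).
assert (0 <= Hw).
{ destruct HH as (dw & zs & _ & I1). apply (int1_square_nonneg dw (INR d - 1) (INR d)); [lra|exact I1]. }
assert (0 <= L2w) by (apply (int1_square_nonneg (wg w) (INR d - 1) (INR d)); [lra|exact HL]).
replace (2 / e * L2w) with (2 / trace_scale * (INR p / h * L2w)) in B by (unfold e; field; repeat split; lra).
replace (e * Hw) with (trace_scale * (h / INR p * Hw)) in B by (unfold e; field; lra).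
assert (0 <= h / INR p * Hw) by (apply Rmult_le_pos; auto; apply Rdiv_le_0_compat; lra).
assert (0 <= INR p / h * L2w) by (apply Rmult_le_pos; auto; apply Rdiv_le_0_compat; lra).
assert (0 < 2 / trace_scale) by (apply Rdiv_lt_0_compat; lra).
unfold trace_const. nra.
Qed.

(* [1/2] and [C3/2] serve the levels with [h_l <= 1]; [C3 c0/(1+C3)] serves the coarser levels,
   where a mesh interval still fits in [0,1], i.e. [c0 h_l <= 1]. *)
Definition eta_const : R := Rmin (Rmin (1 / 2) (C3 / 2)) (C3 * c0 / (1 + C3)).

Lemma eta_const_pos : 0 < eta_const.
Proof. unfold eta_const. apply Rmin_glb_lt; [apply Rmin_glb_lt; lra|apply Rdiv_lt_0_compat; nra]. Qed.

Lemma eta_level_bounds l d : (1 <= l <= S L)%nat -> (1 <= d <= 4)%nat ->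
  eta_const * hlev L hhat l <= eta Xi (hlev L hhat l) d <= 4 * hlev L hhat l.
Proof.
intros Hl Hd. set (h := hlev L hhat l). assert (Hhp : 0 < h) by apply hlev_pos, Hh.
assert (Htd : (trans_dir d = 1 \/ trans_dir d = 2)%nat) by (destruct d as [|[|[|[|[|d]]]]]; simpl; lia).
destruct (HXi _ Htd) as (P & G).
assert (HC31 : C3 * hhat <= hhat).
{ destruct P as (P1 & _). specialize (G 0%nat). rewrite length_map in G. specialize (G ltac:(lia)). lra. }
destruct (eta_bounds p Xi d (C3 * hhat) hhat h Hd P G ltac:(nra) Hhp) as (E1 & E2 & E3).
assert (Hk1 : eta_const <= 1 / 2) by (unfold eta_const; eapply Rle_trans; [apply Rmin_l|apply Rmin_l]).
assert (Hk2 : eta_const <= C3 / 2) by (unfold eta_const; eapply Rle_trans; [apply Rmin_l|apply Rmin_r]).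
assert (Hk3 : eta_const <= C3 * c0 / (1 + C3)) by (unfold eta_const; apply Rmin_r).
destruct (Nat.eq_dec l (S L)) as [Ee|Ee].
- assert (Eh : h = hhat / 4) by (unfold h; rewrite Ee; apply hlev_finest).
  split; [nra|]. eapply Rle_trans; [exact E1|]. apply Rmax_lub; lra.
- assert (Hge : hhat <= h) by (apply hlev_ge; auto; lia).
  assert (Hc0h : c0 * h <= 1).
  { apply (kv_grid_lo_le_1 (simple_kv p (Zc 1%nat l)) _ h); [nra|].
    apply simple_kv_grid, HZ; auto; lia. }
  split; [|eapply Rle_trans; [exact E1|]; apply Rmax_lub; lra].
  destruct (Rle_dec h 1) as [H1|H1].
  + rewrite Rmin_left in E3 by lra. destruct (Rle_dec (2 * hhat) h); nra.
  + rewrite Rmin_right in E3 by lra.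
    assert (C3 / (1 + C3) <= eta Xi h d).
    { destruct (Rle_dec (1 / (1 + C3)) hhat) as [H2|H2].
      - assert (C3 / (1 + C3) <= C3 * hhat).
        { replace (C3 / (1 + C3)) with (C3 * (1 / (1 + C3))) by (field; lra). apply Rmult_le_compat_l; lra. }
        lra.
      - assert (1 - 1 / (1 + C3) = C3 / (1 + C3)) by (field; lra). lra. }
    assert (eta_const * h <= C3 * c0 / (1 + C3) * h) by (apply Rmult_le_compat_r; lra).
    assert (C3 * c0 / (1 + C3) * h = C3 / (1 + C3) * (c0 * h)) by (field; lra).
    assert (0 <= C3 / (1 + C3)) by (apply Rdiv_le_0_compat; lra).
    nra.
Qed.

End Hierarchy.

Lemma scale_ratio_bound k hl hn a1 a2 b1 b2 : 0 < k -> 0 < hl -> 0 < hn ->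
  k * hl <= a1 <= 4 * hl -> k * hl <= a2 <= 4 * hl -> k * hn <= b1 <= 4 * hn -> k * hn <= b2 <= 4 * hn ->
  0 <= Rmin a2 b2 / Rmax a1 b1 + Rmin a1 b1 / Rmax a2 b2 <= 8 / k * (Rmin hl hn / Rmax hl hn).
Proof.
intros Hk Hl Hn H1 H2 H3 H4.
assert (Hr : forall a b c d, 0 < a -> 0 < b -> 0 < c -> 0 <= Rmin a b / Rmax c d).
{ intros a b c d Ha Hb Hc. apply Rdiv_le_0_compat; [apply Rmin_glb; lra|pose proof (Rmax_l c d); lra]. }
assert (0 <= Rmin a2 b2 / Rmax a1 b1) by (apply Hr; nra).
assert (0 <= Rmin a1 b1 / Rmax a2 b2) by (apply Hr; nra).
assert (Rmin a2 b2 / Rmax a1 b1 <= 4 / k * (Rmin hl hn / Rmax hl hn)) by (apply min_div_max_le; auto; nra).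
assert (Rmin a1 b1 / Rmax a2 b2 <= 4 / k * (Rmin hl hn / Rmax hl hn)) by (apply min_div_max_le; auto; nra).
lra.
Qed.

Lemma cross_term_bound I W Q R Rb K Sl Sn : 0 <= R <= Rb -> Rabs I <= Rabs (W * Q) * R ->
  W ^ 2 <= K * Sl -> Q ^ 2 <= K * Sn -> Rabs I <= K / 2 * Rb * (Sl + Sn).
Proof.
intros HR HI HW HQ.
assert (HWQ : Rabs (W * Q) <= K / 2 * (Sl + Sn)).
{ rewrite Rabs_mult, <- (pow2_abs W), <- (pow2_abs Q) in *.
  assert (0 <= (Rabs W - Rabs Q) ^ 2) by apply pow2_ge_0. lra. }
assert (0 <= Rabs (W * Q)) by apply Rabs_pos.
assert (Rabs (W * Q) * R <= K / 2 * (Sl + Sn) * Rb) by (apply Rmult_le_compat; lra).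
lra.
Qed.

Theorem mainTheorem10 :
  forall C3 c0 : R, 0 < C3 -> 0 < c0 ->
  exists c : R, 0 < c /\
  forall (p L : nat) (hhat : R) (Xi : nat -> knotvec) (Zc : nat -> nat -> list R),
    (1 <= p)%nat -> (1 <= L)%nat -> 0 < hhat ->
    (forall d, (d = 1 \/ d = 2)%nat ->
       p_open p (Xi d) /\ gaps_ok (C3 * hhat) hhat (map fst (Xi d))) ->
    (forall d l, (d = 1 \/ d = 2)%nat -> (1 <= l <= L)%nat ->
       bpvec_ok (c0 * hlev L hhat l) (hlev L hhat l) (Zc d l)) ->
    (forall d l, (d = 1 \/ d = 2)%nat -> (1 <= l < L)%nat ->
       incl (Zc d l) (Zc d (S l))) ->
    (forall d, (d = 1 \/ d = 2)%nat -> Zc d L = map fst (Xi d)) ->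
    forall (l n dl : nat) (w q : R -> R -> R),
      (1 <= l <= S L)%nat -> (1 <= n <= S L)%nat -> (1 <= dl <= 4)%nat ->
      Wlev p L Xi Zc l w -> Wlev p L Xi Zc n q ->
      forall I Hw Hq L2w L2q : R,
        H1ip (vext p Xi (hlev L hhat l) dl w) (vext p Xi (hlev L hhat n) dl q) I ->
        side_H1sq w dl Hw -> side_H1sq q dl Hq ->
        side_L2sq w dl L2w -> side_L2sq q dl L2q ->
        let hl := hlev L hhat l in
        let hn := hlev L hhat n in
        Rabs I <= c * (Rmin hl hn / Rmax hl hn) *
          (hl / INR p * Hw + hn / INR p * Hq + INR p / hl * L2w + INR p / hn * L2q).
Proof.
intros C3 c0 HC3 Hc0.
set (k := eta_const C3 c0). set (K := trace_const C3 c0).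
assert (Hk : 0 < k) by (apply eta_const_pos; auto).
assert (HK : 0 < K) by (apply trace_const_pos; auto).
exists (4 * K / k). split; [apply Rdiv_lt_0_compat; lra|].
intros p L hhat Xi Zc Hp _ Hh HXi HZ _ _ l n dl w q Hl Hn Hdl Wl Wn I Hw Hq L2w L2q HI HHw HHq HLw HLq hl hn.
destruct (vext_tensor p Xi dl Hdl) as (dx & dy & sx & sy & Hdx & Hdy & Ev). rewrite !Ev in HI.
pose proof (eta_level_bounds C3 c0 p L hhat Xi Zc HC3 Hc0 Hh HXi HZ) as Heta.
pose proof (vertex_value_level_bound C3 c0 p L hhat Xi Zc HC3 Hc0 Hh HXi HZ) as Hvertex.
assert (Ex1 := Heta l dx Hl Hdx). assert (Ey1 := Heta l dy Hl Hdy).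
assert (Ex2 := Heta n dx Hn Hdx). assert (Ey2 := Heta n dy Hn Hdy).
fold k hl hn in Ex1, Ex2, Ey1, Ey2. fold hl hn in HI.
assert (Hhl : 0 < hl) by apply hlev_pos, Hh. assert (Hhn : 0 < hn) by apply hlev_pos, Hh.
assert (HR := scale_ratio_bound k hl hn _ _ _ _ Hk Hhl Hhn Ex1 Ey1 Ex2 Ey2).
apply H1ip_cutoff_tensor in HI as HIb; [|exact Hp|nra|nra|nra|nra].
assert (Wb := Hvertex l w dl Hw L2w Hp Hl Wl HHw HLw Hdl).
assert (Qb := Hvertex n q dl Hq L2q Hp Hn Wn HHq HLq Hdl).
fold K hl in Wb. fold K hn in Qb.
eapply Rle_trans; [exact (cross_term_bound _ _ _ _ _ _ _ _ HR HIb Wb Qb)|].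
right. set (rho := Rmin hl hn / Rmax hl hn).
set (Sw := hl / INR p * Hw). set (Sq := hn / INR p * Hq).
set (Tw := INR p / hl * L2w). set (Tq := INR p / hn * L2q).
field. lra.
Qed.
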